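(* Let $R$ be an integral domain, let $\delta,\gamma,p,q\in R$ with $2\gamma=p\delta$, and let $a=\mathcal{W}(\delta,\gamma,p,q)$. Then $L^{(-1,p)}(a)=a$, i.e. for all $n\ge0$ $$a_n=\sum_{i=0}^n\binom{n}{i}(-1)^ip^{n-i}a_i,$$ and consequently, for all $n\ge1$, $$\sum_{i=0}^{n-1}\binom{n}{i}(-1)^ip^{n-i}a_i=\begin{cases}0,& n \text{ even},\\ 2a_n,& n\text{ odd}.\end{cases}$$
   Context: $\mathcal{W}(\delta,\gamma,p,q)$ denotes the sequence $(a_n)_{n\ge0}$ with $a_0=\delta$, $a_1=\gamma$, $a_n=pa_{n-1}-qa_{n-2}$ for $n\ge2$. For $h,y\in R$, $L^{(h,y)}(a)$ is the sequence with $n$-th term $\sum_{i=0}^n\binom{n}{i}h^iy^{n-i}a_i$. *)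

From mathcomp Require Import all_boot all_algebra.
Set Implicit Arguments. Unset Strict Implicit. Unset Printing Implicit Defensive.
Import GRing.Theory.
Local Open Scope ring_scope.

(* W(delta,gamma,p,q): a_0 = delta, a_1 = gamma, a_n = p a_{n-1} - q a_{n-2}. *)
Fixpoint Wpair (R : nzRingType) (delta gamma p q : R) (n : nat) : R * R :=
  match n with
  | 0%N => (delta, gamma)
  | n'.+1 => let: (x, y) := Wpair delta gamma p q n' in (y, p * y - q * x)
  end.

Definition W (R : nzRingType) (delta gamma p q : R) (n : nat) : R :=
  (Wpair delta gamma p q n).1.

Definition Ltrans (R : nzRingType) (h y : R) (a : nat -> R) (n : nat) : R :=
  \sum_(i < n.+1) ('C(n, i))%:R * h ^+ i * y ^+ (n - i) * a i.

(* By Pascal's rule, L_{n+1}(a) = p L_n(a) - L_n(Sa) for L := L^{(-1,p)} and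
   the shift S.  If a satisfies a_{k+2} = p a_{k+1} - q a_k, linearity of L
   turns this into L_{n+1}(Sa) = q L_n(a), so L(a) satisfies the same
   recurrence.  Its initial values are a_0 and p a_0 - a_1, which equals a_1
   exactly when 2 a_1 = p a_0; hence L(a) = a.  The second claim is this
   identity with its last term (-1)^n a_n moved to the other side. *)

From mathcomp Require Import all_boot all_algebra.
From mathcomp Require Import ring.
From Stdlib Require Import FunctionalExtensionality.

Set Implicit Arguments.
Unset Strict Implicit.
Unset Printing Implicit Defensive.

Local Open Scope ring_scope.
Import GRing.Theory.

Definition lucas_rec (R : nzRingType) (p q : R) (a : nat -> R) :=
  forall k, a k.+2 = p * a k.+1 - q * a k.

Lemma W_lucas_rec (R : nzRingType) (delta gamma p q : R) :
  lucas_rec p q (W delta gamma p q).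
Proof. by move=> k; rewrite /W /=; case: (Wpair delta gamma p q k). Qed.

Lemma lucas_rec_eq (R : nzRingType) (p q : R) (a b : nat -> R) :
  lucas_rec p q a -> lucas_rec p q b -> a 0 = b 0 -> a 1 = b 1 -> a =1 b.
Proof.
move=> Ha Hb E0 E1 n; suff [] : a n = b n /\ a n.+1 = b n.+1 by [].
by elim: n => [|n [IH IHS]] //; rewrite Ha Hb IH IHS.
Qed.

Section Binomial_transform.
Variable R : comNzRingType.
Implicit Types (h y : R) (a : nat -> R).

Lemma Ltrans0 h y a : Ltrans h y a 0 = a 0.
Proof. by rewrite /Ltrans big_ord1 /= !expr0 !mulr1 mul1r. Qed.

Lemma Ltrans_ord_recr h y a n :
  Ltrans h y a n =
  \sum_(i < n) ('C(n, i))%:R * h ^+ i * y ^+ (n - i) * a i + h ^+ n * a n.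
Proof. by rewrite /Ltrans big_ord_recr /= binn subnn expr0 mulr1 mul1r. Qed.

Lemma LtransS h y a n :
  Ltrans h y a n.+1 = y * Ltrans h y a n + h * Ltrans h y (a \o succn) n.
Proof.
rewrite /Ltrans big_ord_recl [in y * _]big_ord_recl mulrDr !mulr_sumr /=.
under eq_bigr => i _ do rewrite binS natrD !mulrDl.
rewrite big_split /= addrA; congr (_ + _); last first.
  by apply: eq_bigr => i _; rewrite /bump /= add1n subSS exprS; ring.
rewrite big_ord_recr /= (bin_small (ltnSn n)) !mul0r addr0 !subn0 !bin0 exprS.
congr (_ + _); first ring.
apply: eq_bigr => i _; rewrite /bump /= add1n subSS.
by rewrite -subnSK // [y ^+ _.+1]exprS; ring.
Qed.

Lemma Ltrans_shift_rec p q h y a n : lucas_rec p q a ->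
  Ltrans h y (a \o succn \o succn) n =
  p * Ltrans h y (a \o succn) n - q * Ltrans h y a n.
Proof.
move=> Ha; rewrite /Ltrans !mulr_sumr -sumrB.
by apply: eq_bigr => i _; rewrite /= Ha; ring.
Qed.

Section Lucas_invariance.
Variables (p q : R) (a : nat -> R).
Hypothesis Ha : lucas_rec p q a.

Lemma Ltrans_shiftS n : Ltrans (-1) p (a \o succn) n.+1 = q * Ltrans (-1) p a n.
Proof. by rewrite LtransS (Ltrans_shift_rec _ _ _ Ha); ring. Qed.

Lemma Ltrans_lucas_rec : lucas_rec p q (Ltrans (-1) p a).
Proof. by move=> k; rewrite LtransS Ltrans_shiftS; ring. Qed.

End Lucas_invariance.

End Binomial_transform.

Theorem mainTheorem8 (R : idomainType) (delta gamma p q : R) :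
  2%:R * gamma = p * delta ->
  let a := W delta gamma p q in
  (Ltrans (-1) p a = a) /\
  (forall n : nat, (1 <= n)%N ->
     \sum_(i < n) ('C(n, i))%:R * (-1) ^+ i * p ^+ (n - i) * a i =
     (if odd n then 2%:R * a n else 0)).
Proof.
move=> Hpd a.
have Wa := W_lucas_rec delta gamma p q.
have La : Ltrans (-1) p a =1 a.
  apply: lucas_rec_eq (Ltrans_lucas_rec Wa) Wa (Ltrans0 _ _ _) _.
  by rewrite LtransS !Ltrans0 /a /W /= -Hpd; ring.
split=> [|n _]; first exact: functional_extensionality La.
have := La n; rewrite Ltrans_ord_recr => /(canRL (addrK _)) ->.
by rewrite -signr_odd; case: odd => /=; ring.
Qed.
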